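(* Let $(X,\{R_i\}_{i=0}^d)$ be a symmetric association scheme with adjacency matrices $A_0=I,\dots,A_d$ and intersection numbers $p_{ij}^k$, and let $W=\sum_{i=0}^dw_iA_i$ with $w_0=1$ be a complex Hadamard matrix. If $|X|\geq3$, then \[ H_3(W)=\{1\}\cup\left\{\left(\frac{w_iw_j}{w_k}\right)^{\pm1}\;\middle|\;1\leq i,j,k\leq d,\ p_{ij}^k>0\right\}. \]
   Context: An association scheme $(X,\{R_i\}_{i=0}^d)$ is a partition of $X\times X$ into relations $R_0=\{(x,x)\}$, $R_1,\dots,R_d$ such that for $(x,y)\in R_k$ the number $p_{ij}^k=|\{z\in X:(x,z)\in R_i,(z,y)\in R_j\}|$ depends only on $i,j,k$; it is symmetric if each $R_i$ is symmetric. $A_i$ is the $(0,1)$-matrix indexed by $X$ of $R_i$. A complex Hadamard matrix is a square complex matrix $H$ of order $n=|X|$ with entries of absolute value $1$ and $HH^*=nI$. For $W$ indexed by $X$, \[ H_3(W)=\left\{\frac{W_{x_1,y_1}W_{x_2,y_2}}{W_{x_2,y_1}W_{x_1,y_2}}\;\middle|\;x_1,x_2,y_1,y_2\in X,\ |\{x_1,x_2,y_1,y_2\}|=3\right\}. \] *)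

(* Complex numbers: an arbitrary numClosedFieldType C
   (e.g. algC, or complex R for a real closed field R). *)
From HB Require Import structures.
From mathcomp Require Import all_boot all_order all_algebra.
Set Implicit Arguments. Unset Strict Implicit. Unset Printing Implicit Defensive.
Import Order.TTheory GRing.Theory Num.Theory.
Local Open Scope ring_scope.

(* An association scheme with classes R_0,...,R_d on the finite set X is
   encoded by the map r : X -> X -> 'I_d.+1 sending (x,y) to the index i
   with (x,y) in R_i. *)
Definition is_assoc_scheme (X : finType) (d : nat) (r : X -> X -> 'I_d.+1) : Prop :=
  (forall x y, (r x y == ord0) = (x == y)) /\
  (forall i : 'I_d.+1, exists x y, r x y = i) /\
  (* p_{ij}^k is well defined *)
  (forall (i j k : 'I_d.+1) (x y x' y' : X), r x y = k -> r x' y' = k ->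
     #|[set z | (r x z == i) && (r z y == j)]| =
     #|[set z | (r x' z == i) && (r z y' == j)]|).

Definition is_symmetric_scheme (X : finType) (d : nat) (r : X -> X -> 'I_d.+1) : Prop :=
  is_assoc_scheme r /\ forall x y, r x y = r y x.

Definition pnum (X : finType) (d : nat) (r : X -> X -> 'I_d.+1) (i j k : 'I_d.+1) : nat :=
  match [pick xy : X * X | r xy.1 xy.2 == k] with
  | Some xy => #|[set z | (r xy.1 z == i) && (r z xy.2 == j)]|
  | None => 0%N
  end.

Definition adj (C : numClosedFieldType) (X : finType) (d : nat)
  (r : X -> X -> 'I_d.+1) (i : 'I_d.+1) : X -> X -> C :=
  fun x y => (r x y == i)%:R.

Definition schemeW (C : numClosedFieldType) (X : finType) (d : nat)
  (r : X -> X -> 'I_d.+1) (w : 'I_d.+1 -> C) : X -> X -> C :=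
  fun x y => \sum_(i < d.+1) w i * adj C r i x y.

Definition is_complex_hadamard (C : numClosedFieldType) (X : finType)
  (W : X -> X -> C) : Prop :=
  (forall x y, `|W x y| = 1) /\
  (forall x y, \sum_(z : X) W x z * (W y z)^* = (x == y)%:R * #|X|%:R).

Definition in_H3 (C : numClosedFieldType) (X : finType) (W : X -> X -> C) (c : C) : Prop :=
  exists x1 x2 y1 y2 : X, #|[set x1; x2; y1; y2]| = 3%N /\
    c = W x1 y1 * W x2 y2 / (W x2 y1 * W x1 y2).

From HB Require Import structures.
From mathcomp Require Import all_boot all_order all_algebra.
Import Order.TTheory GRing.Theory Num.Theory.
Local Open Scope ring_scope.
Set Implicit Arguments. Unset Strict Implicit.

(* W is constant on the classes, W_xy = w_(r x y), and w_0 = 1.  In a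
   quadruple with exactly three distinct points either a row or a column index
   repeats, and the ratio is 1, or one point is both a row and a column index;
   the ratio is then w_i w_j / w_k or its inverse, where (i, j, k) are the
   classes of the sides of the triangle formed by the three points.  Such
   class triples are exactly those with p_ij^k > 0. *)

Section SmallSets.
Variable T : finType.
Implicit Types a b c e : T.

Lemma card_set4_eq3 a b c e : a != b -> c != e -> #|[set a; b; c; e]| = 3 ->
  [\/ a == c /\ b != e, a == e /\ b != c, b == c /\ a != e | b == e /\ a != c].
Proof.
move=> nab nce; rewrite -!setUA !cardsU1 cards1 !inE !negb_or nab nce.
case: (a =P c) => [<- | _].
  by rewrite (eq_sym b a) nab; case: (b != e) => // _; constructor 1.
case: (a =P e) => [<- | _].
  by rewrite (eq_sym b a) nab; case: (b != c) => // _; constructor 2.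
case: (b =P c) => _; first by constructor 3.
by case: (b =P e) => // _ _; constructor 4.
Qed.

Lemma card_set3_distinct a b c :
  a != b -> a != c -> b != c -> #|[set a; b; c]| = 3.
Proof.
by move=> nab nac nbc; rewrite -setUA cardsU1 cards2 !inE nbc negb_or nab nac.
Qed.

End SmallSets.

Section SchemeH3.
Variables (C : numClosedFieldType) (X : finType) (d : nat).
Variables (r : X -> X -> 'I_d.+1) (w : 'I_d.+1 -> C).

Lemma schemeWE x y : schemeW r w x y = w (r x y).
Proof.
rewrite /schemeW (bigD1 (r x y)) //= /adj eqxx mulr1 big1 ?addr0 // => i ni.
by rewrite eq_sym (negbTE ni) mulr0.
Qed.

Definition scheme_h3_value (c : C) : Prop :=
  c = 1 \/
  exists i j k : 'I_d.+1,
    [/\ (0 < i)%N, (0 < j)%N, (0 < k)%N, (0 < pnum r i j k)%N &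
        (c = w i * w j / w k \/ c = (w i * w j / w k)^-1)].

Lemma scheme_h3_valueV c : scheme_h3_value c -> scheme_h3_value c^-1.
Proof.
case=> [-> | [i [j [k [pi pj pk pijk hc]]]]]; first by left; rewrite invr1.
by right; exists i, j, k; split=> //; case: hc => ->; [right | left; rewrite invrK].
Qed.

Hypothesis r_scheme : is_assoc_scheme r.

Lemma scheme_rxx x : r x x = ord0.
Proof. by case: r_scheme => diag _; apply/eqP; rewrite diag. Qed.

Lemma scheme_r_gt0 x y : (0 < r x y)%N = (x != y).
Proof.
case: r_scheme => diag _; rewrite -(diag x y) lt0n.
by congr negb; apply/eqP/eqP => [/val_inj | ->].
Qed.

Lemma pnum_gt0P i j k :
  (0 < pnum r i j k)%N <-> exists x y z, [/\ r x y = k, r x z = i & r z y = j].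
Proof.
case: r_scheme => _ [_ regular]; rewrite /pnum.
split=> [|[x [y [z [rxy rxz rzy]]]]].
  case: pickP => [[a b] /= /eqP rab | //] /card_gt0P [z].
  by rewrite inE => /andP [/eqP raz /eqP rzb]; exists a, b, z.
case: pickP => [[a b] /= /eqP rab | /(_ (x, y))]; last by rewrite /= rxy eqxx.
rewrite (regular _ _ _ _ _ x y rab rxy); apply/card_gt0P.
by exists z; rewrite inE rxz rzy !eqxx.
Qed.

Lemma triangle_scheme_h3_value x y z : x != y -> x != z -> z != y ->
  scheme_h3_value (w (r x z) * w (r z y) / w (r x y)).
Proof.
move=> nxy nxz nzy; right; exists (r x z), (r z y), (r x y).
rewrite !scheme_r_gt0 nxy nxz nzy; split=> //; last by left.
by apply/pnum_gt0P; exists x, y, z.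
Qed.

Lemma scheme_w_neq0 : (forall x y, `|schemeW r w x y| = 1) -> forall i, w i != 0.
Proof.
move=> W_unit i; case: r_scheme => _ [nonempty _]; have [x [y <-]] := nonempty i.
by rewrite -schemeWE -normr_eq0 W_unit oner_eq0.
Qed.

Hypothesis w0 : w ord0 = 1.
Hypothesis w_neq0 : forall i, w i != 0.

Lemma in_H3_scheme c : in_H3 (schemeW r w) c -> scheme_h3_value c.
Proof.
case=> x1 [x2 [y1 [y2 [card3 ->]]]]; rewrite !schemeWE.
have [<- | n12] := eqVneq x1 x2; first by left; rewrite divff // mulf_neq0.
have [<- | n34] := eqVneq y1 y2.
  by left; rewrite [_ * w _]mulrC divff // mulf_neq0.
case: (card_set4_eq3 n12 n34 card3) => [] [/eqP e nxy].
- subst y1; rewrite -[_ / _]invrK invf_div scheme_rxx w0 mul1r.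
  apply: scheme_h3_valueV.
  by apply: (@triangle_scheme_h3_value x2 y2 x1); rewrite // eq_sym.
- subst y2; rewrite scheme_rxx w0 mulr1 [w (r x1 y1) * _]mulrC.
  by apply: (@triangle_scheme_h3_value x2 y1 x1); rewrite // eq_sym.
- subst y1; rewrite scheme_rxx w0 mul1r.
  exact: (@triangle_scheme_h3_value x1 y2 x2).
- subst y2; rewrite -[_ / _]invrK invf_div scheme_rxx w0 mulr1 [w (r x2 y1) * _]mulrC.
  apply: scheme_h3_valueV.
  by apply: (@triangle_scheme_h3_value x1 y1 x2); rewrite // eq_sym.
Qed.

Lemma scheme_h3_value_in_H3 c :
  (3 <= #|X|)%N -> scheme_h3_value c -> in_H3 (schemeW r w) c.
Proof.
move=> X_ge3; case=> [-> | [i [j [k [i_gt0 j_gt0 k_gt0 /pnum_gt0P hijk hc]]]]].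
  have /card_gt2P [x [y [z [_ [nxy nyz nzx]]]]] := X_ge3.
  exists x, x, y, z; split; first by rewrite setUid card_set3_distinct // eq_sym.
  by rewrite !schemeWE divff // mulf_neq0.
have [x [y [z [rxy rxz rzy]]]] := hijk.
move: i_gt0 j_gt0 k_gt0; rewrite -rxz -rzy -rxy !scheme_r_gt0 => nxz nzy nxy.
case: hc => ->.
  exists x, z, z, y; split; first by rewrite -(setUA [set x]) setUid card_set3_distinct.
  by rewrite !schemeWE rxz rzy rxy scheme_rxx w0 mul1r.
exists z, x, z, y; split.
  by rewrite (setUAC [set z]) setUid card_set3_distinct // eq_sym.
by rewrite !schemeWE rxz rzy rxy scheme_rxx w0 mul1r invf_div.
Qed.

End SchemeH3.

Theorem lemma5p1 (C : numClosedFieldType) (X : finType) (d : nat)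
  (r : X -> X -> 'I_d.+1) (w : 'I_d.+1 -> C) :
  is_symmetric_scheme r ->
  w ord0 = 1 ->
  is_complex_hadamard (schemeW r w) ->
  (3 <= #|X|)%N ->
  forall c : C,
    in_H3 (schemeW r w) c <->
    (c = 1 \/
     exists i j k : 'I_d.+1,
       [/\ (0 < i)%N, (0 < j)%N, (0 < k)%N, (0 < pnum r i j k)%N &
           (c = w i * w j / w k \/ c = (w i * w j / w k)^-1)]).
Proof.
move=> [r_scheme _] w0 [W_unit _] X_ge3 c.
have w_neq0 := scheme_w_neq0 r_scheme W_unit.
split; [exact: in_H3_scheme | exact: scheme_h3_value_in_H3].
Qed.
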